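(* Let $\gamma > \frac{1 + \sqrt{5}}{2}$ and let $I$ be a $\gamma$-stable instance of the metric Steiner tree problem with optimal Steiner tree $\mathrm{OPT}$. Let $H$ be a subgraph of $\mathrm{OPT}$ and let $ab$ be an edge of $H$. If $c \in V$ is a vertex with $w_{ca} \ge \gamma w_{ab}$, then $ca$ is not an edge of $\mathrm{OPT}$.
   Context: An instance of the metric Steiner tree problem consists of a finite set $V$ of points of a metric space with metric $d$, a set $T \subseteq V$ of terminals, and the complete graph on $V$ with edge weights $w_{uv} = d(u,v)$. Points of $V \setminus T$ are Steiner points. A Steiner tree is a tree in this complete graph whose vertex set contains all of $T$; its weight is the sum of its edge weights. For $\gamma > 1$, the instance is $\gamma$-stable if it has a minimum-weight Steiner tree $\mathrm{OPT}$ such that for every $w' : V \times V \to \mathbb{R}_{\ge 0}$ with $w_{uv} \le w'_{uv} \le \gamma w_{uv}$ for all $u,v$, every minimum-weight Steiner tree with respect to $w'$ equals $\mathrm{OPT}$. *)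

From HB Require Import structures.
From mathcomp Require Import all_boot all_order all_algebra.
From mathcomp Require Import reals.
Set Implicit Arguments. Unset Strict Implicit. Unset Printing Implicit Defensive.
Import Order.TTheory GRing.Theory Num.Theory.
Local Open Scope ring_scope.

Section Steiner.
Variables (R : realType) (V : finType).

Definition is_metric (d : V -> V -> R) : Prop :=
  [/\ forall x y, 0 <= d x y,
      forall x y, d x y = 0 <-> x = y,
      forall x y, d x y = d y x &
      forall x y z, d x z <= d x y + d y z].

(* A (sub)graph of the complete graph on V: a vertex set and a set of
   edges, each edge being a 2-element subset of the vertex set. *)
Record graph := Graph { gverts : {set V}; gedges : {set {set V}} }.

Definition wf_graph (G : graph) : Prop :=
  forall e, e \in gedges G -> (e \subset gverts G) /\ #|e| = 2%N.

Definition adj (G : graph) : rel V :=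
  fun x y => (x != y) && ([set x; y] \in gedges G).

Definition connected_graph (G : graph) : Prop :=
  forall x y, x \in gverts G -> y \in gverts G -> connect (adj G) x y.

Definition acyclic (G : graph) : Prop :=
  ~ exists s : seq V, [/\ uniq s, (3 <= size s)%N & cycle (adj G) s].

Definition is_tree (G : graph) : Prop :=
  [/\ wf_graph G, connected_graph G & acyclic G].

Definition steiner_tree (T : {set V}) (G : graph) : Prop :=
  is_tree G /\ T \subset gverts G.

Definition tree_weight (W : {set V} -> R) (G : graph) : R :=
  \sum_(e in gedges G) W e.

(* edge weight induced by d: for e = {u,v} with u <> v this equals d u v
   (given d symmetric and d x x = 0) *)
Definition dE (d : V -> V -> R) (e : {set V}) : R :=
  (\sum_(u in e) \sum_(v in e) d u v) / 2.

Definition min_steiner (T : {set V}) (W : {set V} -> R) (G : graph) : Prop :=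
  steiner_tree T G /\
  forall G', steiner_tree T G' -> tree_weight W G <= tree_weight W G'.

Definition perturbation (d : V -> V -> R) (gamma : R) (W' : {set V} -> R) : Prop :=
  forall u v, u != v -> d u v <= W' [set u; v] <= gamma * d u v.

Definition stable_opt (d : V -> V -> R) (T : {set V}) (gamma : R) (OPT : graph) : Prop :=
  min_steiner T (dE d) OPT /\
  forall W', perturbation d gamma W' ->
    forall G, min_steiner T W' G -> G = OPT.

Definition gamma_stable (d : V -> V -> R) (T : {set V}) (gamma : R) : Prop :=
  exists OPT, stable_opt d T gamma OPT.

End Steiner.

(** Suppose [ca] were an edge of OPT. Raise the weight of every edge of OPT by the factor
    gamma; this is an admissible perturbation, so by stability OPT is still the unique
    minimum Steiner tree. Exchanging [ca] for [cb] yields another Steiner tree (the edge [ab]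
    keeps [b] on the side of [a] once [ca] is removed), and its perturbed weight changes by
    [d c b - gamma d c a]. The triangle inequality and [gamma d a b <= d c a] give
    [gamma d c b <= (gamma + 1) d c a < gamma^2 d c a], the last step because gamma exceeds
    the golden ratio; so the exchange is strictly cheaper, a contradiction. *)

From HB Require Import structures.
From mathcomp Require Import all_boot all_order all_algebra.
From mathcomp Require Import reals.
From mathcomp Require boolp.
From mathcomp Require Import ring lra.
Set Implicit Arguments. Unset Strict Implicit. Unset Printing Implicit Defensive.
Import Order.TTheory GRing.Theory Num.Theory.
Local Open Scope ring_scope.

Lemma gt_golden_ratio (R : rcfType) (g : R) :
  (1 + Num.sqrt 5) / 2 < g -> 1 < g /\ g + 1 < g ^+ 2.
Proof.
move=> lt_phi_g.
have sqrt5_ge0 : 0 <= Num.sqrt (5 : R) by exact: sqrtr_ge0.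
have sqrt5_sqr : Num.sqrt (5 : R) * Num.sqrt 5 = 5 by rewrite -expr2 sqr_sqrtr ?ler0n.
rewrite expr2; split; nra.
Qed.

Lemma set2_eq_cases (V : finType) (x y u v : V) : u != v -> [set x; y] = [set u; v] ->
  (x = u /\ y = v) \/ (x = v /\ y = u).
Proof.
move=> + xy_uv.
have : u \in [set x; y] by rewrite xy_uv set21.
have : v \in [set x; y] by rewrite xy_uv set22.
rewrite !inE => /orP[]/eqP-> /orP[]/eqP->; rewrite ?eqxx // => _;
  first [by left | by right].
Qed.

Lemma uniq_rcons_prefix (T : eqType) (s1 s2 : seq T) x :
  uniq (s1 ++ x :: s2) -> uniq (rcons s1 x).
Proof. by rewrite -cats1 -cat1s catA cat_uniq => /andP[]. Qed.

Section SteinerBasics.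
Variables (R : realType) (V : finType).
Implicit Types (d : V -> V -> R) (T : {set V}) (W : {set V} -> R) (G : graph V).

Lemma wf_edge_neq G x y : wf_graph G -> [set x; y] \in gedges G -> x != y.
Proof. by move=> wf_G /wf_G[_]; rewrite cards2; case: (x != y). Qed.

Lemma adjC G x y : adj G x y = adj G y x.
Proof. by rewrite /adj eq_sym setUC. Qed.

Lemma dE_set2 d u v : is_metric d -> u != v -> dE d [set u; v] = d u v.
Proof.
move=> [_ d_eq0 dC _] uv.
rewrite /dE; do 3 rewrite big_setU1 ?in_set1 //= big_set1.
rewrite (proj2 (d_eq0 u u) erefl) (proj2 (d_eq0 v v) erefl) (dC v u).
by field.
Qed.

Lemma metric_gt0 d x y : is_metric d -> x != y -> 0 < d x y.
Proof.
move=> [d_ge0 d_eq0 _ _] xy; rewrite lt_def d_ge0 andbT.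
by apply: contra xy => /eqP/d_eq0->.
Qed.

Lemma exists_min_steiner T W G : steiner_tree T G -> exists G', min_steiner T W G'.
Proof.
move=> stG.
pose is_st (p : {set V} * {set {set V}}) := boolp.asbool (steiner_tree T (Graph p.1 p.2)).
have is_stG : is_st (gverts G, gedges G) by apply/boolp.asboolP; case: G stG.
case: (arg_minP (fun p => tree_weight W (Graph p.1 p.2)) is_stG) => p /boolp.asboolP stp minp.
exists (Graph p.1 p.2); split => // G' stG'.
by case: G' stG' => vs es stG'; apply: (minp (vs, es)); apply/boolp.asboolP.
Qed.

Lemma stable_opt_min_perturbation d T gamma OPT W :
  stable_opt d T gamma OPT -> perturbation d gamma W -> min_steiner T W OPT.
Proof.
move=> [[stOPT _] stable] pertW.
have [G minG] := exists_min_steiner W stOPT.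
by rewrite -(stable W pertW G minG).
Qed.

Definition scale_edges d gamma (E : {set {set V}}) (e : {set V}) : R :=
  if e \in E then gamma * dE d e else dE d e.

Lemma perturbation_scale_edges d gamma E :
  is_metric d -> 1 <= gamma -> perturbation d gamma (scale_edges d gamma E).
Proof.
move=> metric_d gamma_ge1 u v uv; have [d_ge0 _ _ _] := metric_d.
have := d_ge0 u v; rewrite /scale_edges dE_set2 //.
by case: ifP => _ duv_ge0; apply/andP; split; nra.
Qed.

Definition exchange G (e f : {set V}) : graph V :=
  Graph (gverts G) (f |: (gedges G :\ e)).

Lemma tree_weight_exchange W G e f :
  e \in gedges G -> f \notin gedges G ->
  tree_weight W (exchange G e f) = tree_weight W G - W e + W f.
Proof.
move=> eG fG; rewrite /tree_weight (big_setD1 e eG) big_setU1 /=; last first.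
  by rewrite in_setD1 (negbTE fG) andbF.
by rewrite [W e + _]addrC addrK addrC.
Qed.

Lemma exchange_weight_ge T W G e f :
  min_steiner T W G -> steiner_tree T (exchange G e f) ->
  e \in gedges G -> f \notin gedges G -> W e <= W f.
Proof.
move=> [_ minG] st_exchange eG fG; have := minG _ st_exchange.
by rewrite tree_weight_exchange // -addrA lerDl addrC subr_ge0.
Qed.

End SteinerBasics.

Section ExchangeTree.
Variables (V : finType) (G : graph V) (a b c : V).
Hypotheses (ca : c != a) (ab : a != b) (bc : b != c).
Hypotheses (ab_G : [set a; b] \in gedges G) (ca_G : [set c; a] \in gedges G).
Hypothesis acyclic_G : acyclic G.

Let G' := exchange G [set c; a] [set c; b].

Let adj_off_ca x y := adj G x y && ([set x; y] != [set c; a]).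

Lemma adj_exchange x y :
  adj G' x y -> [\/ x = c /\ y = b, x = b /\ y = c | adj_off_ca x y].
Proof.
case/andP=> xy; rewrite in_setU1 in_setD1 => /orP[/eqP xy_cb | /andP[xy_ca xy_G]].
  have cb : c != b by rewrite eq_sym.
  by case: (set2_eq_cases cb xy_cb) => -[-> ->]; [apply: Or31 | apply: Or32].
by apply: Or33; rewrite /adj_off_ca /adj xy xy_G.
Qed.

Lemma adj_exchange_avoid (z : V) x y :
  z \in [:: b; c] -> x != z -> y != z -> adj G' x y -> adj G x y.
Proof.
move=> z_bc xz yz /adj_exchange[[xc yb]|[xb yc]|/andP[] //]; subst x y;
  by move: z_bc; rewrite !inE => /orP[]/eqP zeq; rewrite zeq ?eqxx in xz yz.
Qed.

(** Removing [ca] leaves no path from [c] to [b]: with the edge [ab] and then [ac]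
    (or with [ac] alone, if the path passes through [a]) it would close a cycle of [G]. *)
Lemma no_path_off_ca q : uniq (c :: q) -> path adj_off_ca c q -> last c q = b -> False.
Proof.
move=> uniq_cq path_q last_q; apply: acyclic_G.
have adj_off_ca_sub : subrel adj_off_ca (adj G) by move=> x y /andP[].
have adj_ac : adj G a c by rewrite /adj eq_sym ca setUC.
have [a_q | a_notin_q] := boolP (a \in q).
  case/splitPr: a_q uniq_cq path_q {last_q} => q1 q2 uniq_cq.
  rewrite cat_path => /and3P[path_q1 adj_a _].
  exists (c :: rcons q1 a); split.
  - exact: (@uniq_rcons_prefix _ (c :: q1) q2).
  - case: q1 {uniq_cq} path_q1 adj_a => [_|? ?]; last by rewrite /= size_rcons.
    by rewrite /adj_off_ca eqxx andbF.
  - rewrite /= rcons_path last_rcons adj_ac rcons_path (adj_off_ca_sub _ _ adj_a).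
    by rewrite (sub_path adj_off_ca_sub path_q1).
exists (c :: rcons q a); split.
- by move: uniq_cq; rewrite /= mem_rcons !inE negb_or ca rcons_uniq a_notin_q.
- case: q last_q {uniq_cq path_q a_notin_q} => [/= cb|? ?]; last by rewrite /= size_rcons.
  by move: bc; rewrite cb eqxx.
- rewrite /= rcons_path last_rcons adj_ac rcons_path last_q (sub_path adj_off_ca_sub path_q).
  by rewrite /adj eq_sym ab setUC ab_G.
Qed.

Lemma no_exchange_path q : q != [::] -> uniq (c :: rcons q b) ->
  path (adj G') c (rcons q b) -> False.
Proof.
case: q => // x q _ uniq_cq path_q; apply: (@no_path_off_ca (rcons (x :: q) b)) => //;
  last by rewrite last_rcons.
have := uniq_cq; rewrite cons_uniq rcons_uniq => /and3P[c_notin b_notin _].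
move: path_q; rewrite rcons_cons /= => /andP[adj_cx path_q]; apply/andP; split.
  case/adj_exchange: adj_cx => [[_ xb]|[cb _]|//].
  - by rewrite xb mem_head in b_notin.
  - by move: bc; rewrite cb eqxx.
apply: (@sub_in_path _ (predC1 c) (adj G') adj_off_ca) path_q.
  by move=> y z /= yc zc /adj_exchange[[/eqP]|[_ /eqP]|//]; rewrite ?(negbTE yc) ?(negbTE zc).
by apply/allP => z z_in /=; apply: contraNneq c_notin => <-.
Qed.

Lemma acyclic_exchange : acyclic G'.
Proof.
case=> s [uniq_s size_s cycle_s].
have avoid z : z \in [:: b; c] -> z \in s.
  move=> z_bc; apply/negPn/negP => z_notin; apply: acyclic_G; exists s; split => //.
  apply: (@sub_in_cycle _ (predC1 z) (adj G') (adj G)) cycle_s.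
    by move=> x y /= xz yz; exact: adj_exchange_avoid z_bc xz yz.
  by apply/allP => y y_s /=; apply: contraNneq z_notin => <-.
have c_s : c \in s by apply: avoid; rewrite !inE eqxx orbT.
have b_s : b \in s by apply: avoid; rewrite mem_head.
rewrite -(rot_uniq (index c s)) (rot_index c_s) in uniq_s.
rewrite -(size_rot (index c s)) (rot_index c_s) in size_s.
rewrite -(rot_cycle (index c s)) (rot_index c_s) in cycle_s.
rewrite -(mem_rot (index c s)) (rot_index c_s) inE (negbTE bc) /= in b_s.
move: uniq_s size_s cycle_s b_s; set p := _ ++ _ => uniq_s size_s cycle_s b_p.
case/splitPr: b_p uniq_s size_s cycle_s => p1 p2 uniq_s size_s.
rewrite /= rcons_cat /= cat_path /= => /and3P[path_p1 adj_b path_p2].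
case: p1 uniq_s size_s path_p1 adj_b => [|x p1] uniq_s size_s path_p1 adj_b.
  apply: (@no_exchange_path (rev p2)).
  - by move: size_s; rewrite -size_eq0 size_rev /=; case: (size p2).
  - by rewrite -rev_cons /= mem_rev rev_uniq.
  - have path_rev : path (fun y z => adj G' z y) b (rcons p2 c).
      by rewrite (@eq_path _ _ (adj G')) // => y z; exact: adjC.
    by rewrite -rev_path last_rcons belast_rcons rev_cons in path_rev.
apply: (@no_exchange_path (x :: p1)) => //; last by rewrite rcons_path path_p1.
exact: (@uniq_rcons_prefix _ (c :: x :: p1) p2).
Qed.

Lemma cb_notin_edges : [set c; b] \notin gedges G.
Proof.
apply/negP => cb_G; apply: acyclic_G; exists [:: c; b; a]; split => //.
- by rewrite /= !inE negb_or (eq_sym c b) bc ca eq_sym ab.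
- rewrite /= /adj (eq_sym c b) bc cb_G eq_sym ab setUC ab_G.
  by rewrite eq_sym ca setUC ca_G.
Qed.

Lemma connected_exchange : connected_graph G -> connected_graph G'.
Proof.
move=> connected_G x y x_G y_G.
have adj_cb : adj G' c b by rewrite /adj eq_sym bc in_setU1 eqxx.
have adj_ba : adj G' b a.
  rewrite /adj eq_sym ab in_setU1 in_setD1 setUC ab_G andbT; apply/orP; right.
  apply/eqP => /(set2_eq_cases ca)[[ac _]|[_ bc']].
  - by move: ca; rewrite ac eqxx.
  - by move: bc; rewrite bc' eqxx.
apply: (connect_sub _ (connected_G x y x_G y_G)) => u v /andP[uv uv_G].
have [/eqP uv_ca | uv_ca] := boolP ([set u; v] == [set c; a]); last first.
  by apply: connect1; rewrite /adj uv in_setU1 in_setD1 uv_ca uv_G orbT.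
have connect_ca : connect (adj G') c a := connect_trans (connect1 adj_cb) (connect1 adj_ba).
by case: (set2_eq_cases ca uv_ca) => -[-> ->]; rewrite // sym_connect_sym //; exact: adjC.
Qed.

Lemma wf_exchange : wf_graph G -> wf_graph G'.
Proof.
move=> wf_G e; rewrite in_setU1 in_setD1 => /orP[/eqP-> | /andP[_ /wf_G] //].
split; last by rewrite cards2 eq_sym bc.
have c_G : c \in gverts G by apply: (subsetP (wf_G _ ca_G).1); rewrite set21.
have b_G : b \in gverts G by apply: (subsetP (wf_G _ ab_G).1); rewrite set22.
by apply/subsetP => z; rewrite !inE => /orP[]/eqP->.
Qed.

Lemma steiner_tree_exchange T : steiner_tree T G -> steiner_tree T G'.
Proof.
case=> [[wf_G connected_G _] T_G]; split => //; split.
- exact: wf_exchange.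
- exact: connected_exchange.
- exact: acyclic_exchange.
Qed.

End ExchangeTree.

Lemma exchange_gain (R : realFieldType) (g dab dca dcb : R) :
  0 < g -> g + 1 < g ^+ 2 -> 0 < dca -> dcb <= dca + dab -> g * dab <= dca -> dcb < g * dca.
Proof.
move=> g_gt0 g_golden dca_gt0 tri ab_ca; rewrite -(ltr_pM2l g_gt0).
rewrite expr2 in g_golden; nra.
Qed.

Theorem mainTheorem8 (R : realType) (V : finType) (d : V -> V -> R)
  (T : {set V}) (gamma : R) (OPT : graph V)
  (H : {set {set V}}) (a b c : V) :
  (1 + Num.sqrt 5) / 2 < gamma ->
  is_metric d ->
  stable_opt d T gamma OPT ->
  H \subset gedges OPT ->
  [set a; b] \in H ->
  gamma * d a b <= d c a ->
  [set c; a] \notin gedges OPT.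
Proof.
move=> /gt_golden_ratio[gamma_gt1 gamma_golden] metric_d stable_OPT H_OPT ab_H ab_ca.
apply/negP => ca_OPT; have ab_OPT := subsetP H_OPT _ ab_H.
have [[st_OPT _] _] := stable_OPT; have [[wf_OPT _ acyclic_OPT] _] := st_OPT.
have [ca ab] := (wf_edge_neq wf_OPT ca_OPT, wf_edge_neq wf_OPT ab_OPT).
have [_ _ dC dtri] := metric_d.
have bc : b != c.
  apply: contraTneq ab_ca => <-; rewrite (dC b a) -ltNge.
  by have := metric_gt0 metric_d ab; nra.
have cb_OPT := cb_notin_edges ca ab bc ab_OPT ca_OPT acyclic_OPT.
have min_OPT := stable_opt_min_perturbation stable_OPT
  (perturbation_scale_edges (gedges OPT) metric_d (ltW gamma_gt1)).
have := exchange_weight_ge min_OPT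
  (steiner_tree_exchange ca ab bc ab_OPT ca_OPT acyclic_OPT st_OPT) ca_OPT cb_OPT.
have cb : c != b by rewrite eq_sym.
rewrite /scale_edges ca_OPT (negbTE cb_OPT) !dE_set2 //.
apply/negP; rewrite -ltNge.
apply: exchange_gain (metric_gt0 metric_d ca) (dtri c a b) _ => //.
exact: lt_trans ltr01 gamma_gt1.
Qed.
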